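(* Let $K\subset\mathbb{R}^d$ be compact, let $m\ge1$, let $k_1,\dots,k_m\ge 0$ be integers, let $\alpha_1,\dots,\alpha_m\in\mathbb{R}$, and for each $i$ let $h^{(k_i)}$ be a $k_i$-order hinge function on $\mathbb{R}^d$. Then there exists a two-layer Morph-Net all of whose morphological neurons are dilation neurons (no erosion neurons) whose output $N({\bm{x}})$ satisfies $N({\bm{x}})=\sum_{i=1}^m\alpha_i h^{(k_i)}({\bm{x}})$ for all ${\bm{x}}\in K$.
   Context: For ${\bm{x}}\in\mathbb{R}^p$ write ${\bm{x}}'=(x_1,\dots,x_p,0)\in\mathbb{R}^{p+1}$ (augmented input). For a structuring element ${\bm{s}}\in\mathbb{R}^{p+1}$, the dilation neuron computes ${\bm{x}}\oplus{\bm{s}}=\max_{1\le k\le p+1}(x'_k+s_k)$ and the erosion neuron computes ${\bm{x}}\ominus{\bm{s}}=\min_{1\le k\le p+1}(x'_k-s_k)$. A dilation-erosion layer applied to ${\bm{y}}\in\mathbb{R}^p$ consists of finitely many dilation and erosion neurons (each with its own structuring element in $\mathbb{R}^{p+1}$) all applied to ${\bm{y}}$, and outputs the vector of their values. A linear combination layer is an affine map ${\bm{z}}\mapsto A{\bm{z}}+{\bm{c}}$. A two-layer Morph-Net $N:\mathbb{R}^d\to\mathbb{R}$ is the composition: dilation-erosion layer on ${\bm{x}}\in\mathbb{R}^d$, then a linear combination layer, then a second dilation-erosion layer applied to the resulting vector, then a linear combination layer with a single real output. A $k$-order hinge function on $\mathbb{R}^d$ is a function of the form $h^{(k)}({\bm{x}})=\pm\max\{{\bm{w}}_1^\top{\bm{x}}+b_1,\dots,{\bm{w}}_{k+1}^\top{\bm{x}}+b_{k+1}\}$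 with ${\bm{w}}_r\in\mathbb{R}^d$, $b_r\in\mathbb{R}$. *)

From Stdlib Require Import Reals.
From mathcomp Require Import ssreflect ssrfun ssrbool eqtype ssrnat seq choice fintype.
Set Warnings "-notation-overridden".
Set Implicit Arguments. Unset Strict Implicit. Unset Printing Implicit Defensive.
Local Open Scope R_scope.

Definition vec (n : nat) := 'I_n -> R.

Definition sumI (n : nat) (f : 'I_n -> R) : R :=
  foldr (fun j acc => f j + acc) 0 (enum 'I_n).
Definition maxI (n : nat) (f : 'I_n.+1 -> R) : R :=
  foldr (fun j acc => Rmax (f j) acc) (f ord0) (enum 'I_n.+1).

Definition dot (n : nat) (w x : vec n) : R := sumI (fun j => w j * x j).

(* augmented input x' = (x_1, ..., x_p, 0) in R^(p+1) *)
Definition augment (p : nat) (x : vec p) : vec p.+1 :=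
  fun k => match unlift ord_max k with
           | Some j => x j
           | None => 0
           end.

Definition dilation (p : nat) (x : vec p) (s : vec p.+1) : R :=
  maxI (fun k => augment x k + s k).
Definition erosion (p : nat) (x : vec p) (s : vec p.+1) : R :=
  - maxI (fun k => - (augment x k - s k)).
(* erosion = min_k (x'_k - s_k), written as -max(-(.)) *)

Inductive neuron_kind := Dil | Ero.

Definition neuron (p : nat) (kd : neuron_kind) (s : vec p.+1) (x : vec p) : R :=
  match kd with Dil => dilation x s | Ero => erosion x s end.

Definition de_layer (p n : nat) (kind : 'I_n -> neuron_kind)
  (S : 'I_n -> vec p.+1) (y : vec p) : vec n :=
  fun i => neuron (kind i) (S i) y.

Definition lin_layer (n m : nat) (A : 'I_m -> 'I_n -> R) (c : vec m) (z : vec n)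
  : vec m := fun i => dot (A i) z + c i.

Unset Implicit Arguments.
Record MorphNet (d : nat) := {
  mn_n1 : nat;
  mn_n2 : nat;
  mn_n3 : nat;
  mn_kind1 : 'I_mn_n1 -> neuron_kind;
  mn_S1 : 'I_mn_n1 -> vec d.+1;
  mn_A : 'I_mn_n2 -> 'I_mn_n1 -> R;
  mn_c : vec mn_n2;
  mn_kind2 : 'I_mn_n3 -> neuron_kind;
  mn_S2 : 'I_mn_n3 -> vec mn_n2.+1;
  mn_w : vec mn_n3;
  mn_b : R
}.
Arguments mn_n1 {d}. Arguments mn_n2 {d}. Arguments mn_n3 {d}.
Arguments mn_kind1 {d}. Arguments mn_S1 {d}. Arguments mn_A {d}. Arguments mn_c {d}.
Arguments mn_kind2 {d}. Arguments mn_S2 {d}. Arguments mn_w {d}. Arguments mn_b {d}.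
Set Implicit Arguments.

Definition mn_eval (d : nat) (N : MorphNet d) (x : vec d) : R :=
  let z1 := de_layer (mn_kind1 N) (mn_S1 N) x in
  let y1 := lin_layer (mn_A N) (mn_c N) z1 in
  let z2 := de_layer (mn_kind2 N) (mn_S2 N) y1 in
  dot (mn_w N) z2 + mn_b N.

Definition only_dilations (d : nat) (N : MorphNet d) : Prop :=
  (forall i, mn_kind1 N i = Dil) /\ (forall i, mn_kind2 N i = Dil).

Definition hinge (d k : nat) (neg : bool) (W : 'I_k.+1 -> vec d) (B : 'I_k.+1 -> R)
  (x : vec d) : R :=
  let v := maxI (fun r => dot (W r) x + B r) in
  if neg then - v else v.

Definition is_hinge (d k : nat) (h : vec d -> R) : Prop :=
  exists (neg : bool) (W : 'I_k.+1 -> vec d) (B : 'I_k.+1 -> R),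
    forall x, h x = hinge neg W B x.

Definition open_set (d : nat) (U : vec d -> Prop) : Prop :=
  forall x, U x -> exists eps, 0 < eps /\
    forall y : vec d, (forall j, Rabs (y j - x j) < eps) -> U y.

Definition compact_set (d : nat) (K : vec d -> Prop) : Prop :=
  forall (I : Type) (U : I -> vec d -> Prop),
    (forall i, open_set (U i)) ->
    (forall x, K x -> exists i, U i x) ->
    exists (n : nat) (f : 'I_n -> I), forall x, K x -> exists j, U (f j) x.

From Pilot Require Import Defs.
From Stdlib Require Import Reals Lra IndefiniteDescription.
From mathcomp Require Import ssreflect ssrfun ssrbool eqtype ssrnat seq choice fintype.
Set Implicit Arguments. Unset Strict Implicit.
Local Open Scope R_scope.

(* On inputs whose coordinates are bounded by B (compactness of K provides B), a
   dilation neuron whose structuring element is 0 on a selected set of coordinates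
   and -2B on all others computes the maximum of the selected coordinates.  So a
   first dilation layer can reproduce the input, the linear layer can list the
   affine pieces of all the hinge functions, and a second dilation layer can take,
   for each hinge, the maximum of its pieces; the signs and the alpha_i go into the
   output weights. *)

Lemma sumI_ext n (f g : 'I_n -> R) : (forall j, f j = g j) -> sumI f = sumI g.
Proof. by move=> fg; rewrite /sumI; elim: (enum 'I_n) => //= a l ->; rewrite fg. Qed.

Lemma sumI_ge0 n (f : 'I_n -> R) : (forall j, 0 <= f j) -> 0 <= sumI f.
Proof.
move=> f_ge0; rewrite /sumI; elim: (enum 'I_n) => /= [|a l IH]; first lra.
by have := f_ge0 a; lra.
Qed.

Lemma sumI_term_le n (f : 'I_n -> R) : (forall j, 0 <= f j) -> forall j0, f j0 <= sumI f.
Proof.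
move=> f_ge0 j0; rewrite /sumI.
have: j0 \in enum 'I_n by rewrite mem_enum.
elim: (enum 'I_n) => //= a l IH; rewrite in_cons => /orP [/eqP <-|j0l].
- suff: 0 <= foldr (fun j acc => f j + acc) 0 l by lra.
  by elim: l {IH} => /= [|b l IHl]; [lra | have := f_ge0 b; lra].
- by have := IH j0l; have := f_ge0 a; lra.
Qed.

Lemma Rabs_sumI_le n (f g : 'I_n -> R) :
  (forall j, Rabs (f j) <= g j) -> Rabs (sumI f) <= sumI g.
Proof.
move=> fg; rewrite /sumI; elim: (enum 'I_n) => /= [|a l IH]; first by rewrite Rabs_R0; lra.
by apply: Rle_trans (Rabs_triang _ _) _; have := fg a; lra.
Qed.

Lemma Rabs_dot_le n (w x : vec n) c :
  (forall j, Rabs (x j) <= c) -> Rabs (dot w x) <= sumI (fun j => Rabs (w j) * c).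
Proof.
move=> xc; apply: Rabs_sumI_le => j; rewrite Rabs_mult.
by apply: Rmult_le_compat_l; [apply: Rabs_pos | apply: xc].
Qed.

Lemma maxI_ub n (f : 'I_n.+1 -> R) j : f j <= maxI f.
Proof.
rewrite /maxI; have: j \in enum 'I_n.+1 by rewrite mem_enum.
elim: (enum 'I_n.+1) => //= a l IH; rewrite in_cons => /orP [/eqP <-|jl].
- exact: Rmax_l.
- exact: Rle_trans (IH jl) (Rmax_r _ _).
Qed.

Lemma maxI_attained n (f : 'I_n.+1 -> R) : exists j, maxI f = f j.
Proof.
rewrite /maxI; elim: (enum 'I_n.+1) => /= [|a l [j ->]]; first by exists ord0.
case: (Rle_dec (f a) (f j)) => [le_aj|lt_ja].
- by exists j; rewrite Rmax_right.
- by exists a; rewrite Rmax_left //; lra.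
Qed.

Lemma maxI_eq n (f : 'I_n.+1 -> R) v :
  (forall j, f j <= v) -> (exists j, f j = v) -> maxI f = v.
Proof.
move=> f_le [j fj]; have [j1 max_j1] := maxI_attained f.
apply: Rle_antisym; first by rewrite max_j1.
by rewrite -fj; apply: maxI_ub.
Qed.

Lemma dot_ext n (w x y : vec n) : (forall j, x j = y j) -> dot w x = dot w y.
Proof. by move=> xy; apply: sumI_ext => j; rewrite xy. Qed.

Definition interior_set d (P : vec d -> Prop) (x : vec d) : Prop :=
  exists eps, 0 < eps /\ forall y : vec d, (forall j, Rabs (y j - x j) < eps) -> P y.

(* Qualified: Reals also exports an [open_set], on subsets of R. *)
Lemma open_interior_set d (P : vec d -> Prop) : Defs.open_set (interior_set P).
Proof.
move=> x [eps [eps_gt0 Px]]; exists (eps / 2); split; first lra.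
move=> y yx; exists (eps / 2); split; first lra.
move=> z zy; apply: Px => j.
replace (z j - x j) with ((z j - y j) + (y j - x j)) by ring.
by apply: Rle_lt_trans (Rabs_triang _ _) _; have := zy j; have := yx j; lra.
Qed.

Lemma compact_set_bounded d (K : vec d -> Prop) :
  compact_set K -> exists B, forall x, K x -> forall j, Rabs (x j) <= B.
Proof.
move=> K_compact.
pose U (c : R) := interior_set (fun y : vec d => forall j, Rabs (y j) < c).
have [n [c cover]] : exists n (c : 'I_n -> R), forall x, K x -> exists i, U (c i) x.
  apply: K_compact => [c|x _]; first exact: open_interior_set.
  exists (sumI (fun j => Rabs (x j)) + 1), 1; split; first lra.
  move=> y yx j; replace (y j) with ((y j - x j) + x j) by ring.
  apply: Rle_lt_trans (Rabs_triang _ _) _.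
  by have := yx j; have := sumI_term_le (fun j => Rabs_pos (x j)) j; lra.
exists (sumI (fun i => Rabs (c i))) => x Kx j.
have [i [eps [eps_gt0 xc]]] := cover x Kx.
have := xc x (fun j => ltac:(by rewrite Rminus_diag Rabs_R0)) j.
by have := sumI_term_le (fun i => Rabs_pos (c i)) i; have := Rle_abs (c i); lra.
Qed.

Definition select_se p (sel : pred 'I_p) (M : R) : vec p.+1 :=
  fun k => match unlift ord_max k with
           | Some j => if sel j then 0 else - M
           | None => - M
           end.

Lemma dilation_select p (y : vec p) (sel : pred 'I_p) B v :
  (forall j, Rabs (y j) <= B) -> (forall j, sel j -> y j <= v) ->
  (exists2 j, sel j & y j = v) -> dilation y (select_se sel (2 * B)) = v.
Proof.
move=> yB sel_le [j0 sel_j0 y_j0].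
have [v_lo v_hi] : - B <= v /\ v <= B by rewrite -y_j0; have := yB j0; split_Rabs; lra.
apply: maxI_eq => [k|].
- rewrite /augment /select_se; case: (unlift ord_max k) => [j|]; last lra.
  case: ifP => [/sel_le|_]; first lra.
  by have := Rle_abs (y j); have := yB j; lra.
- by exists (lift ord_max j0); rewrite /augment /select_se liftK sel_j0 y_j0; ring.
Qed.

Lemma hinge_family_data d m (k : 'I_m -> nat) (h : 'I_m -> vec d -> R) :
  (forall i, is_hinge (k i) (h i)) ->
  exists (neg : 'I_m -> bool) (W : forall i, 'I_(k i).+1 -> vec d)
         (B : forall i, 'I_(k i).+1 -> R),
    forall i x, h i x = hinge (neg i) (W i) (B i) x.
Proof.
move=> h_hinge.
have data i : {p : bool * (('I_(k i).+1 -> vec d) * ('I_(k i).+1 -> R)) |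
                forall x, h i x = hinge p.1 p.2.1 p.2.2 x}.
  apply: constructive_indefinite_description.
  by have [neg [W [B hE]]] := h_hinge i; exists (neg, (W, B)).
exists (fun i => (sval (data i)).1), (fun i => (sval (data i)).2.1),
       (fun i => (sval (data i)).2.2).
by move=> i; exact: (proj2_sig (data i)).
Qed.

Unset Implicit Arguments.

Section HingeNet.

Variables (d m : nat) (k : 'I_m -> nat) (alpha : 'I_m -> R) (neg : 'I_m -> bool)
  (W : forall i, 'I_(k i).+1 -> vec d) (B : forall i, 'I_(k i).+1 -> R) (Bx : R).

Definition hinge_piece := {i : 'I_m & 'I_(k i).+1}.

Definition piece_weight (q : 'I_#|{: hinge_piece}|) : vec d :=
  W (tag (enum_val q)) (tagged (enum_val q)).
Definition piece_bias (q : 'I_#|{: hinge_piece}|) : R :=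
  B (tag (enum_val q)) (tagged (enum_val q)).

Definition piece_bound : R :=
  sumI (fun q => sumI (fun j => Rabs (piece_weight q j) * Bx) + Rabs (piece_bias q)).

Definition hinge_net : MorphNet d := {|
  mn_n1 := d; mn_n2 := #|{: hinge_piece}|; mn_n3 := m;
  mn_kind1 := fun _ => Dil; mn_S1 := fun j => select_se (pred1 j) (2 * Bx);
  mn_A := piece_weight; mn_c := piece_bias;
  mn_kind2 := fun _ => Dil;
  mn_S2 := fun i => select_se (fun q => tag (enum_val q) == i) (2 * piece_bound);
  mn_w := fun i => alpha i * (if neg i then -1 else 1); mn_b := 0 |}.

Lemma hinge_net_only_dilations : only_dilations hinge_net.
Proof. by split. Qed.

Variable x : vec d.
Hypothesis xB : forall j, Rabs (x j) <= Bx.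

Let first_layer := de_layer (mn_kind1 hinge_net) (mn_S1 hinge_net) x.
Let pieces := lin_layer (mn_A hinge_net) (mn_c hinge_net) first_layer.

Lemma pieces_eq q : pieces q = dot (piece_weight q) x + piece_bias q.
Proof.
congr (_ + _); apply: dot_ext => j.
apply: dilation_select xB _ _ => [j' /eqP -> | ]; first exact: Rle_refl.
exact: (ex_intro2 _ _ j (eqxx j) erefl).
Qed.

Lemma pieces_bounded q : Rabs (pieces q) <= piece_bound.
Proof.
have piece_ge0 q' :
    0 <= sumI (fun j => Rabs (piece_weight q' j) * Bx) + Rabs (piece_bias q').
  apply: Rplus_le_le_0_compat; last exact: Rabs_pos.
  apply: sumI_ge0 => j; apply: Rmult_le_pos; first exact: Rabs_pos.
  exact: Rle_trans (Rabs_pos (x j)) (xB j).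
rewrite pieces_eq; apply: Rle_trans (sumI_term_le piece_ge0 q).
by apply: Rle_trans (Rabs_triang _ _) _; apply: Rplus_le_compat_r; apply: Rabs_dot_le.
Qed.

Lemma second_layer_eq i :
  de_layer (mn_kind2 hinge_net) (mn_S2 hinge_net) pieces i
  = maxI (fun r => dot (W i r) x + B i r).
Proof.
apply: dilation_select pieces_bounded _ _ => [q|].
- rewrite pieces_eq /piece_weight /piece_bias.
  case: (enum_val q) => i' r /= /eqP i'_i; subst i'.
  exact: (maxI_ub (fun r => dot (W i r) x + B i r)).
- have [r ->] := maxI_attained (fun r => dot (W i r) x + B i r).
  exists (enum_rank (Tagged _ r : hinge_piece)).
  + by rewrite /= enum_rankK.
  + by rewrite pieces_eq /piece_weight /piece_bias enum_rankK.
Qed.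

Lemma hinge_net_eval :
  mn_eval hinge_net x = sumI (fun i => alpha i * hinge (neg i) (W i) (B i) x).
Proof.
rewrite /mn_eval Rplus_0_r; apply: sumI_ext => i.
by rewrite /= second_layer_eq /hinge; case: (neg i); ring.
Qed.

End HingeNet.

Theorem lemma1 (d : nat) (K : vec d -> Prop) (m : nat)
  (k : 'I_m -> nat) (alpha : 'I_m -> R) (h : 'I_m -> vec d -> R) :
  compact_set K ->
  (0 < m)%N ->
  (forall i, is_hinge (k i) (h i)) ->
  exists N : MorphNet d, only_dilations N /\
    forall x, K x -> mn_eval N x = sumI (fun i => alpha i * h i x).
Proof.
move=> /compact_set_bounded [Bx xB] _ /hinge_family_data [neg [W [B hE]]].
exists (hinge_net _ _ _ alpha neg W B Bx); split; first exact: hinge_net_only_dilations.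
move=> x Kx; rewrite hinge_net_eval; first by apply: sumI_ext => i; rewrite hE.
exact: xB.
Qed.
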